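(* Let $p$ be a prime. For $i\in\{1,2\}$ let $D_i$ be a finite group, $\psi_i:D_i\to\mathrm{GL}_{d_i}(\mathbb{F}_p)$ a representation, and $G_i=\mathbb{Z}_p^{d_i}\rtimes_{\psi_i}D_i$, where $p\nmid|D_1||D_2|$. Then the following are equivalent: (i) $G_1\cong G_2$; (ii) there exists an isomorphism $\sigma:D_1\to D_2$ such that $\psi_2\circ\sigma\cong\psi_1$ (as representations of $D_1$). Moreover, if (ii) holds, there exists an isomorphism $f:G_1\to G_2$ with $f(D_1)=D_2$ and $f|_{D_1}=\sigma$.
   Context: $\mathbb{Z}_p^{d}\rtimes_\psi D$ denotes the semidirect product in which $D$ acts on $\mathbb{Z}_p^d=\mathbb{F}_p^d$ via $\psi$; $D_i$ is identified with its canonical complement in $G_i$. *)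

From HB Require Import structures.
From mathcomp Require Import all_boot all_order all_algebra all_fingroup all_solvable all_field all_character.
Set Implicit Arguments. Unset Strict Implicit. Unset Printing Implicit Defensive.
Local Open Scope group_scope.

(* The semidirect product  F_p^d  ><|_psi  D, for psi : D -> GL_d(F_p) given as
   an mx_representation on row vectors (acting on the right: v |-> v *m psi a). *)
Definition sdprodT (p : nat) (dT : finGroupType) (D : {group dT}) (d : nat)
  (psi : mx_representation 'F_p D d) : finGroupType :=
  sdprod_groupType ('MR psi)%gact.

Definition complD (p : nat) (dT : finGroupType) (D : {group dT}) (d : nat)
  (psi : mx_representation 'F_p D d) : {set sdprodT psi} :=
  (sdpair2 ('MR psi)%gact @* D)%g.

Lemma isom_sub_pre (aT rT : finGroupType) (D1 : {group aT}) (D2 : {group rT})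
  (s : {morphism D1 >-> rT}) : isom D1 D2 s -> D1 \subset s @*^-1 D2.
Proof.
case/isomP=> _ <-; by rewrite -sub_morphim_pre.
Qed.

Definition comp_repr (R : comUnitRingType) (aT rT : finGroupType)
  (D1 : {group aT}) (D2 : {group rT}) (s : {morphism D1 >-> rT})
  (iso : isom D1 D2 s) (n : nat) (rG : mx_representation R D2 n) :
  mx_representation R D1 n :=
  subg_repr (morphpre_repr s rG) (isom_sub_pre iso).

From mathcomp Require Import all_boot all_order all_algebra all_fingroup all_solvable all_field all_character.
Set Implicit Arguments. Unset Strict Implicit. Unset Printing Implicit Defensive.
Import GRing.Theory.
Local Open Scope group_scope.

(* Since p does not divide #|D|, the translation subgroup V = F_p^d of
   G = F_p^d ><| D is the normal Sylow p-subgroup 'O_p(G), hence is preserved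
   by every isomorphism phi : G1 -> G2. Restricted to V1, phi is additive, hence
   given by an invertible matrix B over the prime field; modulo V, phi induces
   sigma : D1 = G1/V1 -> G2/V2 = D2; and comparing phi (v ^ a) with
   phi v ^ phi a gives psi1 a * B = B * psi2 (sigma a). Conversely, such B and
   sigma are compatible with the two actions and glue to an isomorphism of the
   semidirect products extending sigma. *)

Section SdprodT.
Variables (p : nat) (dT : finGroupType) (D : {group dT}) (d : nat).
Variable psi : mx_representation 'F_p D d.
Local Notation to := ('MR psi)%gact.
Local Notation G := (sdprodT psi).

Definition sdprodV : {set G} := sdpair1 to @* [set: 'rV['F_p]_d].

Lemma sdprodT_fst_in (u : G) : u.1 \in D.
Proof. by case: u => [[a x]] /= /setXP[]. Qed.

Lemma sdpair1_pair (x : 'rV['F_p]_d) : pair_of_sd (sdpair1 to x) = (1, x).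
Proof. by rewrite /sdpair1 insubdK // inE group1 inE. Qed.

Lemma sdpair2_pair a : a \in D -> pair_of_sd (sdpair2 to a) = (a, 0%R).
Proof. by move=> Da; rewrite /sdpair2 insubdK // inE Da group1. Qed.

Lemma sdpair1D (x y : 'rV['F_p]_d) :
  sdpair1 to (x + y)%R = sdpair1 to x * sdpair1 to y.
Proof. exact: sdpair1_morphM (in_setT x) (in_setT y). Qed.

Lemma sdpair1J (x : 'rV['F_p]_d) a :
  a \in D -> sdpair1 to x ^ sdpair2 to a = sdpair1 to (x *m psi a)%R.
Proof. by move=> Da; rewrite -sdpair_act ?inE //= mx_repr_actE. Qed.

Lemma sdpair1J_sdpair1 (x y : 'rV['F_p]_d) :
  sdpair1 to x ^ sdpair1 to y = sdpair1 to x.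
Proof. by rewrite conjgE -sdpair1D addrC sdpair1D mulKg. Qed.

Lemma mem_sdprodV (u : G) : (u \in sdprodV) = (u.1 == 1).
Proof.
apply/idP/eqP => [/morphimP[x _ _ ->] | u1]; first by rewrite sdpair1_pair.
by rewrite [u]sdpairE u1 morph1 mul1g mem_morphim ?in_setT.
Qed.

Lemma sdprodV_sdpair1 (u : G) : u \in sdprodV -> sdpair1 to u.2 = u.
Proof. by case/morphimP=> x _ _ ->; rewrite sdpair1_pair. Qed.

Lemma sdprodV_complD : sdprodV ><| complD psi = [set: G].
Proof. exact: sdprod_sdpair. Qed.

Hypothesis p_pr : prime p.

Lemma card_sdprodV : #|sdprodV| = (p ^ d)%N.
Proof.
by rewrite (card_injm (injm_sdpair1 to)) ?subsetT // cardsT card_mx card_Fp ?mul1n.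
Qed.

Hypothesis p'D : ~~ (p %| #|D|).

Lemma pcore_sdprodT : 'O_p([set: G]) = sdprodV.
Proof.
have [nVG _ _ _ _] := sdprod_context sdprodV_complD.
apply: normal_Hall_pcore nVG; rewrite /pHall subsetT /pgroup card_sdprodV.
rewrite pnatX pnat_id //= -(index_sdprod sdprodV_complD).
by rewrite /complD (card_injm (injm_sdpair2 to)) // p'natE.
Qed.

End SdprodT.

Section AdditiveMx.
Local Open Scope ring_scope.

(* Every element of 'F_p is a natural multiple of 1, so additivity implies
   'F_p-linearity. *)
Lemma additive_rV_Fp_mx (p m n : nat) (h : 'rV['F_p]_m -> 'rV['F_p]_n) :
  {morph h : u v / u + v} -> exists B, forall u, h u = u *m B.
Proof.
move=> hD; have h0 : h 0 = 0 by apply: (addrI (h 0)); rewrite -hD !addr0.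
have hMn k u : h (u *+ k) = h u *+ k.
  by elim: k => [|k IHk]; rewrite ?mulr0n // !mulrS hD IHk.
exists (\matrix_(i < m) h (delta_mx 0 i)) => u.
rewrite mulmx_sum_row {1}[u]row_sum_delta (big_morph h hD h0).
apply: eq_bigr => i _; case: (u 0 i) => [k lt_k] /=.
by rewrite rowK -(natr_Zp (Ordinal lt_k)) !scaler_nat hMn.
Qed.

End AdditiveMx.

Section IsomToRsim.
Variables (p : nat) (dT1 dT2 : finGroupType) (D1 : {group dT1}) (D2 : {group dT2}).
Variables (d1 d2 : nat) (psi1 : mx_representation 'F_p D1 d1).
Variable psi2 : mx_representation 'F_p D2 d2.
Hypotheses (p_pr : prime p) (p'D1 : ~~ (p %| #|D1|)) (p'D2 : ~~ (p %| #|D2|)).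
Local Notation to1 := ('MR psi1)%gact.
Local Notation to2 := ('MR psi2)%gact.
Variable phi : {morphism [set: sdprodT psi1] >-> sdprodT psi2}.
Hypotheses (injphi : 'injm phi) (imphi : phi @* setT = setT).

Lemma morphim_sdprodV : phi @* sdprodV psi1 = sdprodV psi2.
Proof.
by rewrite -(pcore_sdprodT _ p_pr p'D1) -(pcore_sdprodT _ p_pr p'D2) injm_pcore ?imphi.
Qed.

Lemma sdprodV_dim_eq : d1 = d2.
Proof.
apply/eqP; rewrite -(eqn_exp2l _ _ (prime_gt1 p_pr)).
rewrite -(card_sdprodV psi1 p_pr) -(card_sdprodV psi2 p_pr).
by rewrite -morphim_sdprodV (card_injm injphi) ?subsetT.
Qed.

Lemma sdpair1_phi (v : 'rV['F_p]_d1) :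
  phi (sdpair1 to1 v) = sdpair1 to2 (phi (sdpair1 to1 v)).2.
Proof.
by rewrite sdprodV_sdpair1 // -morphim_sdprodV !mem_morphim ?in_setT.
Qed.

Lemma sdpair1_phi_mx : exists2 B : 'M['F_p]_(d1, d2),
  row_free B & forall v, phi (sdpair1 to1 v) = sdpair1 to2 (v *m B)%R.
Proof.
pose h v := (phi (sdpair1 to1 v)).2.
have hD : {morph h : u v / (u + v)%R}.
  move=> u v; apply: (injmP (injm_sdpair1 to2)); rewrite ?in_setT //=.
  by rewrite sdpair1D -!sdpair1_phi sdpair1D morphM ?in_setT.
have [B hB] := additive_rV_Fp_mx hD.
have phiB v : phi (sdpair1 to1 v) = sdpair1 to2 (v *m B)%R by rewrite -hB -sdpair1_phi.
exists B => //; apply: inj_row_free => v vB0.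
apply: (injmP (injm_sdpair1 to1)); rewrite ?in_setT //.
by apply: (injmP injphi); rewrite ?in_setT // !phiB vB0 mul0mx.
Qed.

(* The first projection of sdprodT is a morphism with kernel sdprodV, so this is
   the map D1 = G1 / V1 -> G2 / V2 = D2 induced by phi. *)
Definition complm_fun (a : dT1) : dT2 := (phi (sdpair2 to1 a)).1.

Lemma complm_morphM : {in D1 &, {morph complm_fun : a b / a * b}}.
Proof. by move=> a b Da Db; rewrite /complm_fun !morphM ?in_setT. Qed.

Canonical complm := Morphism complm_morphM.

Lemma injm_complm : 'injm complm.
Proof.
apply/subsetP=> a /[!inE] /andP[Da /eqP a1].
have : sdpair2 to1 a \in phi @*^-1 (phi @* sdprodV psi1).
  by rewrite mem_morphpre ?in_setT // morphim_sdprodV mem_sdprodV; apply/eqP.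
by rewrite injmK ?subsetT // mem_sdprodV sdpair2_pair.
Qed.

Lemma im_complm : complm @* D1 = D2.
Proof.
apply/eqP; rewrite eqEsubset; apply/andP; split.
  by apply/subsetP=> _ /morphimP[a _ Da ->]; apply: sdprodT_fst_in.
apply/subsetP=> b Db; have : sdpair2 to2 b \in phi @* setT by rewrite imphi in_setT.
case/morphimP=> u _ _ phi_u.
have -> : b = (pair_of_sd (sdpair2 to2 b)).1 by rewrite sdpair2_pair.
rewrite phi_u [u]sdpairE morphM ?in_setT // sdpair1_phi /= sdpair1_pair mulg1.
by apply: (mem_morphim complm); apply: sdprodT_fst_in.
Qed.

Lemma complm_isom : isom D1 D2 complm.
Proof. by apply/isomP; rewrite injm_complm im_complm. Qed.

Lemma complm_rsim : mx_rsim psi1 (comp_repr complm_isom psi2).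
Proof.
have [B rfB phiB] := sdpair1_phi_mx.
apply: (MxReprSim sdprodV_dim_eq rfB) => a Da /=.
apply/eqP/mulmxP=> v; rewrite !mulmxA.
apply: (injmP (injm_sdpair1 to2)); rewrite ?in_setT //=.
(* phi (sdpair2 a) is sdpair2 (complm a) times an element of the abelian V2. *)
rewrite -phiB -sdpair1J // morphJ ?in_setT // phiB [phi _]sdpairE conjgM.
by rewrite sdpair1J ?sdprodT_fst_in // sdpair1J_sdpair1.
Qed.

End IsomToRsim.

Section RsimToIsom.
Variables (p : nat) (dT1 dT2 : finGroupType) (D1 : {group dT1}) (D2 : {group dT2}).
Variables (d : nat) (psi1 : mx_representation 'F_p D1 d).
Variable psi2 : mx_representation 'F_p D2 d.
Local Notation to1 := ('MR psi1)%gact.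
Local Notation to2 := ('MR psi2)%gact.
Variables (sigma : {morphism D1 >-> dT2}) (iso_sigma : isom D1 D2 sigma).
Variable B : 'M['F_p]_d.
Hypothesis uB : B \in unitmx.
Hypothesis psiB : forall a, a \in D1 -> (psi1 a *m B = B *m psi2 (sigma a))%R.

Let im_sigma : sigma @* D1 = D2. Proof. by case/isomP: iso_sigma. Qed.

Lemma sigma_in a : a \in D1 -> sigma a \in D2.
Proof. by move=> Da; rewrite -im_sigma mem_morphim. Qed.

Definition sdpair1_mx_fun (v : 'rV['F_p]_d) : sdprodT psi2 := sdpair1 to2 (v *m B)%R.

Lemma sdpair1_mx_morphM : {in setT &, {morph sdpair1_mx_fun : u v / u * v}}.
Proof. by move=> u v _ _; rewrite /sdpair1_mx_fun mulmxDl sdpair1D. Qed.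

Canonical sdpair1_mx := Morphism sdpair1_mx_morphM.

Definition sdpair2_sigma_fun (a : dT1) : sdprodT psi2 := sdpair2 to2 (sigma a).

Lemma sdpair2_sigma_morphM : {in D1 &, {morph sdpair2_sigma_fun : a b / a * b}}.
Proof. by move=> a b Da Db; rewrite /sdpair2_sigma_fun !morphM ?sigma_in. Qed.

Canonical sdpair2_sigma := Morphism sdpair2_sigma_morphM.

Lemma sdpair_mx_act : {in setT & D1, morph_act to1 'J sdpair1_mx sdpair2_sigma}.
Proof.
move=> v a _ Da /=; rewrite /sdpair1_mx_fun /sdpair2_sigma_fun sdpair1J ?sigma_in //.
by rewrite mx_repr_actE // -!mulmxA psiB.
Qed.

Local Notation sdprod_lift := (xsdprod_morphism sdpair_mx_act).

Lemma sdprod_lift_sdpair2 a :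
  a \in D1 -> sdprod_lift (sdpair2 to1 a) = sdpair2 to2 (sigma a).
Proof.
move=> Da; rewrite /= /xsdprodm sdprodmEr ?mem_morphim //=.
by rewrite /restrm /= invmE.
Qed.

Lemma im_sdpair1_mx : sdpair1_mx @* setT = sdprodV psi2.
Proof.
apply/eqP; rewrite eqEsubset; apply/andP; split; apply/subsetP.
  by move=> _ /morphimP[v _ _ ->]; rewrite /= /sdpair1_mx_fun mem_morphim ?in_setT.
move=> _ /morphimP[w _ _ ->]; apply/morphimP.
exists (w *m invmx B)%R; rewrite ?in_setT //.
by rewrite /= /sdpair1_mx_fun mulmxKV.
Qed.

Lemma im_sdpair2_sigma : sdpair2_sigma @* D1 = complD psi2.
Proof.
apply/eqP; rewrite eqEsubset; apply/andP; split; apply/subsetP.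
  by move=> _ /morphimP[a _ Da ->]; rewrite /= /sdpair2_sigma_fun mem_morphim ?sigma_in.
move=> _ /morphimP[b _ Db ->].
have /morphimP[a _ Da ->] : b \in sigma @* D1 by rewrite im_sigma.
exact: (mem_morphim sdpair2_sigma).
Qed.

Lemma sdprod_lift_isom : isom [set: sdprodT psi1] [set: sdprodT psi2] sdprod_lift.
Proof.
apply/isomP; split; last by rewrite im_xsdprodm im_sdpair1_mx im_sdpair2_sigma im_sdpair.
rewrite injm_xsdprodm im_sdpair1_mx im_sdpair2_sigma im_sdpair_TI eqxx andbT.
apply/andP; split; apply/injmP.
  move=> u v _ _ /(injmP (injm_sdpair1 to2) _ _ (in_setT _) (in_setT _)).
  by apply: row_free_inj; rewrite row_free_unit.
move=> a b Da Db /(injmP (injm_sdpair2 to2) _ _ (sigma_in Da) (sigma_in Db)).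
exact: (injmP (isom_inj iso_sigma)).
Qed.

Lemma sdprod_lift_complD : sdprod_lift @* complD psi1 = complD psi2.
Proof.
rewrite -im_sdpair2_sigma; apply/eqP; rewrite eqEsubset.
apply/andP; split; apply/subsetP.
  move=> _ /morphimP[_ _ /morphimP[a _ Da ->] ->].
  by rewrite sdprod_lift_sdpair2 // (mem_morphim sdpair2_sigma).
move=> _ /morphimP[a _ Da ->]; rewrite /= /sdpair2_sigma_fun -sdprod_lift_sdpair2 //.
by rewrite mem_morphim ?in_setT ?mem_morphim.
Qed.

End RsimToIsom.

Lemma rsim_sdprodT_isom (p : nat) (dT1 dT2 : finGroupType)
  (D1 : {group dT1}) (D2 : {group dT2}) (d1 d2 : nat)
  (psi1 : mx_representation 'F_p D1 d1) (psi2 : mx_representation 'F_p D2 d2)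
  (sigma : {morphism D1 >-> dT2}) (iso_sigma : isom D1 D2 sigma) :
  mx_rsim psi1 (comp_repr iso_sigma psi2) ->
  exists f : {morphism [set: sdprodT psi1] >-> sdprodT psi2},
    [/\ isom [set: sdprodT psi1] [set: sdprodT psi2] f,
        f @* complD psi1 = complD psi2
      & {in D1, forall a,
           f (sdpair2 ('MR psi1)%gact a) = sdpair2 ('MR psi2)%gact (sigma a)}].
Proof.
case=> B d12 rfB psiB; subst d2; have uB : B \in unitmx by rewrite -row_free_unit.
exists (xsdprod_morphism (sdpair_mx_act iso_sigma psiB)); split.
- exact: sdprod_lift_isom.
- exact: sdprod_lift_complD.
- exact: sdprod_lift_sdpair2.
Qed.

Theorem lemma5p2 (p : nat) (hp : prime p)
  (dT1 dT2 : finGroupType) (D1 : {group dT1}) (D2 : {group dT2})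
  (d1 d2 : nat)
  (psi1 : mx_representation 'F_p D1 d1) (psi2 : mx_representation 'F_p D2 d2)
  (hcop : ~~ (p %| #|D1| * #|D2|)) :
  ( ([set: sdprodT psi1] \isog [set: sdprodT psi2])%g
    <->
    (exists (sigma : {morphism D1 >-> dT2}) (iso : isom D1 D2 sigma),
        mx_rsim psi1 (comp_repr iso psi2)) )
  /\
  (forall (sigma : {morphism D1 >-> dT2}) (iso : isom D1 D2 sigma),
      mx_rsim psi1 (comp_repr iso psi2) ->
      exists f : {morphism [set: sdprodT psi1] >-> sdprodT psi2},
        [/\ isom [set: sdprodT psi1] [set: sdprodT psi2] f,
            (f @* complD psi1)%g = complD psi2
          & {in D1, forall a,
               f (sdpair2 ('MR psi1)%gact a) = sdpair2 ('MR psi2)%gact (sigma a)}]).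
Proof.
rewrite Euclid_dvdM // negb_or in hcop; case/andP: hcop => p'D1 p'D2.
split; last exact: rsim_sdprodT_isom.
split=> [/isogP[phi injphi imphi] | [sigma [iso_sigma]]].
  by exists (complm phi), (complm_isom hp p'D1 p'D2 injphi imphi); apply: complm_rsim.
case/rsim_sdprodT_isom=> f [iso_f _ _].
by apply/isogP; exists f; case/isomP: iso_f.
Qed.
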